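(* Consider Algorithm 1 applied to $\min\varphi(w)$ s.t. $w\in D$, and assume that the sublevel set $\mathcal S_\varphi(w^0):=\{w\in D:\varphi(w)\le\varphi(w^0)\}$ is bounded. Then exactly one of the following occurs: (i) in some outer iteration $j$ the inner loop does not terminate; then $w^{j,i}\to w^j$ as $i\to\infty$, $w^j$ is M-stationary, and $\|\gamma_{j,i}(w^j-w^{j,i})+\nabla\varphi(w^{j,i})-\nabla\varphi(w^j)\|\to0$ as $i\to\infty$; (ii) the inner loop always terminates; then the infinite sequence $\{w^j\}$ of outer iterates has convergent subsequences, and every subsequence with $w^j\to_K\bar w$ satisfies: $\bar w$ is M-stationary and $\gamma_j(w^{j+1}-w^j)\to_K0$.
   Context: $\mathbb W$ is a Euclidean space, $\varphi\colon\mathbb W\to\mathbb R$ continuously differentiable, $D\subset\mathbb W$ nonempty and closed (neither need be convex). A point $w\in D$ is M-stationary for $\min\varphi$ over $D$ if $0\in\nabla\varphi(w)+\mathcal N^{\lim}_D(w)$, where $\mathcal N^{\lim}_D(\bar w):=\limsup_{w\to\bar w}\operatorname{cone}(w-\Pi_D(w))$ (outer set limit, $\Pi_D$ the multivalued Euclidean projection). Algorithm 1 (general spectral gradient method, without termination test): parameters $\tau>1$, $\sigma\in(0,1)$, $0<\gamma_{\min}\le\gamma_{\max}<\infty$, $m\in\mathbb N$, starting point $w^0\in D$. For $j=0,1,2,\dots$: set $m_j:=\min(j,m)$ and choose $\gamma_j^0\in[\gamma_{\min},\gamma_{\max}]$; for $i=1,2,\dots$ set $\gamma_{j,i}:=\tau^{i-1}\gamma_j^0$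 and compute a (global) solution $w^{j,i}$ of $\min_w \varphi(w^j)+\langle\nabla\varphi(w^j),w-w^j\rangle+\frac{\gamma_{j,i}}2\|w-w^j\|^2$ s.t. $w\in D$ (subproblem $Q(j,i)$); the inner loop stops at the first $i$ with $\varphi(w^{j,i})\le\max_{r=0,\dots,m_j}\varphi(w^{j-r})+\sigma\langle\nabla\varphi(w^j),w^{j,i}-w^j\rangle$; then set $i_j:=i$, $\gamma_j:=\gamma_{j,i_j}$, $w^{j+1}:=w^{j,i_j}$. *)

(* W = 'rV[R]_n (Euclidean space R^n) with the
   standard inner product; topology = the product topology of mathcomp-analysis
   (which coincides with the Euclidean one). *)
From HB Require Import structures.
From mathcomp Require Import all_boot all_order all_algebra.
From mathcomp Require Import all_classical all_reals all_analysis.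
Set Implicit Arguments. Unset Strict Implicit. Unset Printing Implicit Defensive.
Import Order.TTheory GRing.Theory Num.Theory.
Import numFieldNormedType.Exports.
Local Open Scope classical_set_scope.
Local Open Scope ring_scope.

Section Defs.
Context {R : realType} {n : nat}.
Notation W := 'rV[R]_n.

Definition dot (u v : W) : R := \sum_(i < n) u ord0 i * v ord0 i.
Definition enorm (u : W) : R := Num.sqrt (dot u u).

Definition proj (D : set W) (w p : W) : Prop :=
  D p /\ forall q, D q -> enorm (w - p) <= enorm (w - q).

Definition cone (S : set W) : set W :=
  [set v | exists t s, 0 <= t /\ S s /\ v = t *: s].

(* limiting normal cone: outer (Painleve-Kuratowski) limit of
   cone(w - Pi_D(w)) as w -> wbar *)
Definition Nlim (D : set W) (wbar : W) : set W :=
  [set v | exists (wk vk : nat -> W),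
     wk @ \oo --> wbar /\ vk @ \oo --> v /\
     forall k, cone [set u | exists p, proj D (wk k) p /\ u = wk k - p] (vk k)].

Definition Mstationary (D : set W) (grad : W -> W) (w : W) : Prop :=
  exists v, Nlim D w v /\ grad w + v = 0.

Definition C1_with_grad (phi : W -> R) (grad : W -> W) : Prop :=
  continuous grad /\
  forall w, differentiable phi w /\ ('d phi w : W -> R) = (fun h => dot (grad w) h).

Definition gam (tau : R) (g0 : nat -> R) (j i : nat) : R := tau ^+ i.-1 * g0 j.

Definition Qobj (phi : W -> R) (grad : W -> W) (wj : W) (gji : R) (v : W) : R :=
  phi wj + dot (grad wj) (v - wj) + gji / 2 * enorm (v - wj) ^+ 2.

Definition refval (phi : W -> R) (w : nat -> W) (m j : nat) : R :=
  \big[Num.max/phi (w j)]_(r < (minn j m).+1) phi (w (j - r)%N).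

Definition accept (phi : W -> R) (grad : W -> W) (sigma : R) (m : nat)
  (w : nat -> W) (wi : nat -> nat -> W) (j i : nat) : Prop :=
  phi (wi j i) <= refval phi w m j + sigma * dot (grad (w j)) (wi j i - w j).

Definition terminates phi grad sigma m w wi (j : nat) : Prop :=
  exists i, (1 <= i)%N /\ accept phi grad sigma m w wi j i.

Definition reached phi grad sigma m w wi (j : nat) : Prop :=
  forall k, (k < j)%N -> terminates phi grad sigma m w wi k.

(* (w, g0, wi, ij) is a run of Algorithm 1: w = outer iterates,
   g0 j = gamma_j^0, wi j i = w^{j,i} (global solutions of Q(j,i), i >= 1),
   ij j = i_j (first accepted inner index) *)
Definition alg1_run (phi : W -> R) (grad : W -> W) (D : set W)
  (tau sigma gmin gmax : R) (m : nat) (w0 : W)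
  (w : nat -> W) (g0 : nat -> R) (wi : nat -> nat -> W) (ij : nat -> nat) : Prop :=
  w 0%N = w0 /\
  forall j, reached phi grad sigma m w wi j ->
    [/\ gmin <= g0 j <= gmax,
        (forall i, (1 <= i)%N ->
           D (wi j i) /\
           forall v, D v -> Qobj phi grad (w j) (gam tau g0 j i) (wi j i)
                            <= Qobj phi grad (w j) (gam tau g0 j i) v) &
        (terminates phi grad sigma m w wi j ->
           [/\ (1 <= ij j)%N, accept phi grad sigma m w wi j (ij j),
               (forall i, (1 <= i < ij j)%N -> ~ accept phi grad sigma m w wi j i) &
               w j.+1 = wi j (ij j)])].

End Defs.

From Pilot Require Import Defs.
From HB Require Import structures.
From mathcomp Require Import all_boot all_order all_algebra.
From mathcomp Require Import all_classical all_reals all_analysis.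
From mathcomp Require Import ring lra zify.
Import Order.TTheory GRing.Theory Num.Theory.
Import numFieldNormedType.Exports.
Local Open Scope classical_set_scope.
Local Open Scope ring_scope.
Set Implicit Arguments. Unset Strict Implicit. Unset Printing Implicit Defensive.

(* The subproblem Q(j,i) is the projection of the gradient step w - g^-1 grad phi(w) onto D, so a
   solution q provides the limiting normal g (w - q) - grad phi(w) at nearby points, and a limit of
   iterates is M-stationary as soon as the scaled steps g (w - q) vanish. When a trial point is
   rejected, the mean value theorem bounds its scaled step by the oscillation of grad phi along the
   step, which is small near a fixed point once g is large. This gives case (i) directly, and the
   backtracked iterations of case (ii). For the remaining iterations of case (ii), the nonmonotone
   acceptance test makes the reference values nonincreasing and, by the argument of Grippo,
   Lampariello and Lucidi, drives the steps to zero; the bounded sublevel set keeps all iterates in a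
   compact ball. *)

Section Euclid.
Context {R : realType} {n : nat}.
Notation W := 'rV[R]_n.
Local Notation N := (n.+1%:R : R).
Implicit Types u v x : W.

Lemma dotC u v : dot u v = dot v u.
Proof. by apply: eq_bigr => i _; rewrite mulrC. Qed.

Lemma dotDl u v x : dot (u + v) x = dot u x + dot v x.
Proof. by rewrite /dot -big_split; apply: eq_bigr => i _; rewrite mxE mulrDl. Qed.

Lemma dotZl a u v : dot (a *: u) v = a * dot u v.
Proof. by rewrite /dot mulr_sumr; apply: eq_bigr => i _; rewrite mxE mulrA. Qed.

Lemma dotNl u v : dot (- u) v = - dot u v.
Proof. by rewrite -scaleN1r dotZl mulN1r. Qed.

Lemma dotBl u v x : dot (u - v) x = dot u x - dot v x.
Proof. by rewrite dotDl dotNl. Qed.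

Lemma dotDr u v x : dot x (u + v) = dot x u + dot x v.
Proof. by rewrite dotC dotDl !(dotC x). Qed.

Lemma dotZr a u v : dot v (a *: u) = a * dot v u.
Proof. by rewrite dotC dotZl dotC. Qed.

Lemma dotNr u v : dot v (- u) = - dot v u.
Proof. by rewrite dotC dotNl dotC. Qed.

Lemma dotBr u v x : dot x (u - v) = dot x u - dot x v.
Proof. by rewrite dotDr dotNr. Qed.

Lemma dot0r u : dot u 0 = 0.
Proof. by rewrite /dot big1 // => i _; rewrite mxE mulr0. Qed.

Lemma dot_ge0 u : 0 <= dot u u.
Proof. by apply: sumr_ge0 => i _; rewrite -expr2 sqr_ge0. Qed.

Lemma enorm_ge0 u : 0 <= enorm u.
Proof. exact: sqrtr_ge0. Qed.

Lemma sqr_enorm u : enorm u ^+ 2 = dot u u.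
Proof. by rewrite sqr_sqrtr // dot_ge0. Qed.

Lemma ler_enorm u v : (enorm u <= enorm v) = (dot u u <= dot v v).
Proof. by rewrite /enorm ler_sqrt ?dot_ge0. Qed.

(* [`|u|] is the max norm of the matrix normed space, not the Euclidean one. *)
Lemma normr_rVE u : `|u| = \big[Num.max/0]_ij `|u ij.1 ij.2|.
Proof. exact: mx_normrE. Qed.

Lemma entry_le_norm u i : `|u ord0 i| <= `|u|.
Proof. by rewrite normr_rVE; apply: (le_bigmax _ _ (ord0, i)). Qed.

Lemma norm_le_enorm u : `|u| <= enorm u.
Proof.
rewrite normr_rVE; apply: bigmax_le => [|[a i] _ /=]; first exact: enorm_ge0.
rewrite (ord1 a) -sqrtr_sqr /enorm ler_sqrt ?dot_ge0 // /dot (bigD1 i) //=.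
by rewrite -expr2 lerDl; apply: sumr_ge0 => j _; rewrite -expr2 sqr_ge0.
Qed.

Lemma sqr_norm_le_dot u : `|u| ^+ 2 <= dot u u.
Proof. by rewrite -sqr_enorm lerXn2r ?nnegrE ?norm_le_enorm ?enorm_ge0. Qed.

Lemma dot_le_norm u v : `|dot u v| <= N * `|u| * `|v|.
Proof.
apply: le_trans (ler_norm_sum _ _ _) _.
apply: (@le_trans _ _ (\sum_(i < n) `|u| * `|v|)).
  by apply: ler_sum => i _; rewrite normrM ler_pM ?entry_le_norm.
rewrite sumr_const card_ord -[leRHS]mulrA -[in leLHS]mulr_natl.
by apply: ler_wpM2r; rewrite ?mulr_ge0 ?ler_nat.
Qed.

Lemma enorm_le_norm u : enorm u <= N * `|u|.
Proof.
have N1 : 1 <= N by rewrite ler1n.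
have uu : dot u u <= N * `|u| ^+ 2.
  by rewrite expr2 mulrA; exact: le_trans (ler_norm _) (dot_le_norm u u).
rewrite -(ler_pXn2r (n := 2)) ?nnegrE ?enorm_ge0 ?mulr_ge0 // sqr_enorm.
by apply: le_trans uu _; rewrite exprMn ler_wpM2r ?sqr_ge0 // expr2 ler_peMl.
Qed.

Lemma norm_le_of_dot_le u v : dot u u <= dot v v -> `|u| <= N * `|v|.
Proof.
by rewrite -ler_enorm => uv; apply: le_trans (norm_le_enorm u) (le_trans uv _);
  apply: enorm_le_norm.
Qed.

End Euclid.

Lemma incr_geq (s : nat -> nat) : (forall k, (s k < s k.+1)%N) -> forall k, (k <= s k)%N.
Proof. by move=> s_incr; elim=> // k IH; apply: leq_ltn_trans IH (s_incr k). Qed.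

Lemma cvg_comp_geq {T : topologicalType} (u : nat -> T) (h : nat -> nat) (l : T) :
  (forall k, (k <= h k)%N) -> u @ \oo --> l -> (u \o h) @ \oo --> l.
Proof.
move=> hk ul; apply: cvg_comp ul; apply/cvgnyPge => A.
by apply: filterS (nbhs_infty_ge A) => k /leq_trans; apply.
Qed.

Section MeanValue.
Context {R : realType} {n : nat}.
Notation W := 'rV[R]_n.

Lemma C1_mean_value (phi : W -> R) (grad : W -> W) x y : C1_with_grad phi grad ->
  exists2 c : R, 0 <= c <= 1 & phi y - phi x = dot (grad (x + c *: (y - x))) (y - x).
Proof.
move=> [_ dphi]; set d := y - x.
pose h : R -> R := fun t => phi (x + t *: d).
have quotE t : (fun s : R => s^-1 *: ((h \o shift t) (s *: (1:R)) - h t)) =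
   (fun s : R => s^-1 *: ((phi \o shift (x + t *: d)) (s *: d) - phi (x + t *: d))).
  apply/funext => s /=; rewrite /h /=; congr (_ *: (phi _ - _)).
  by rewrite [s *: 1]mulr1 scalerDl addrCA.
have h_derivable t : derivable h t 1 /\ 'D_1 h t = dot (grad (x + t *: d)) d.
  have [dif dE] := dphi (x + t *: d).
  split; first by rewrite /derivable quotE; apply: diff_derivable.
  by rewrite /derive quotE -/(derive _ _ _) deriveE // dE.
have h_is_derive t : is_derive t (1:R) h (dot (grad (x + t *: d)) d).
  by rewrite -(h_derivable t).2; apply: derivableP (h_derivable t).1.
have [c c01 hc] := @MVT_segment R h (fun t => dot (grad (x + t *: d)) d) 0 1 ler01
  (fun t _ => h_is_derive t)
  (derivable_within_continuous (fun t _ => (h_derivable t).1)).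
exists c; first by move: c01; rewrite in_itv.
by move: hc; rewrite /h scale0r addr0 scale1r subr0 mulr1 /d addrCA subrr addr0.
Qed.

End MeanValue.

Section Projection.
Context {R : realType} {n : nat}.
Notation W := 'rV[R]_n.

Lemma dotBB (u v : W) : dot (u - v) (u - v) = dot u u - 2 * dot u v + dot v v.
Proof. by rewrite !dotBl !dotBr (dotC v u); ring. Qed.

Lemma proj_segment (D : set W) z p (t : R) : Defs.proj D z p -> 0 <= t <= 1 ->
  Defs.proj D (p + t *: (z - p)) p.
Proof.
move=> [Dp p_near] /andP[t0 t1]; split=> // q Dq.
have := p_near q Dq; rewrite !ler_enorm.
have -> : z - q = (z - p) - (q - p) by apply/rowP => i; rewrite !mxE; ring.
have -> : p + t *: (z - p) - q = t *: (z - p) - (q - p).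
  by apply/rowP => i; rewrite !mxE; ring.
rewrite [p + _ - p]addrAC subrr add0r (dotBB (z - p)) (dotBB (t *: _)) !dotZl !dotZr.
have := dot_ge0 (q - p).
set a := dot (z - p) (z - p); set ab := dot (z - p) (q - p); set b := dot (q - p) _.
by move=> b0 h; have [ab0|ab0] := leP 0 ab; nra.
Qed.

End Projection.

Lemma ler_cancel_factor {R : realFieldType} (a b e : R) : 0 <= e -> 0 <= b ->
  a * e ^+ 2 <= b * e -> a * e <= b.
Proof.
move=> e0 b0; have [->|e_neq0] := eqVneq e 0; first by move=> _; rewrite mulr0.
have e_gt0 : 0 < e by rewrite lt_def e_neq0.
by rewrite expr2 mulrA ler_pM2r.
Qed.

Section Subproblem.
Context {R : realType} {n : nat}.
Notation W := 'rV[R]_n.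
Local Notation N := (n.+1%:R : R).
Variables (phi : W -> R) (grad : W -> W) (D : set W).
Implicit Types (x p v : W) (g : R).

Definition Qsol x g p :=
  D p /\ forall v, D v -> Qobj phi grad x g p <= Qobj phi grad x g v.

Definition armijo_fails (sigma : R) x p := phi x + sigma * dot (grad x) (p - x) < phi p.

Lemma QobjE x g v :
  Qobj phi grad x g v = phi x + dot (grad x) (v - x) + g / 2 * dot (v - x) (v - x).
Proof. by rewrite /Qobj sqr_enorm. Qed.

Lemma Qsol_descent x g p : D x -> Qsol x g p ->
  dot (grad x) (p - x) + g / 2 * dot (p - x) (p - x) <= 0.
Proof. by move=> Dx [_ p_min]; have := p_min x Dx; rewrite !QobjE subrr !dot0r; lra. Qed.

Lemma Qsol_dot_le0 x g p : 0 < g -> D x -> Qsol x g p -> dot (grad x) (p - x) <= 0.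
Proof.
move=> g0 Dx p_sol; have := Qsol_descent Dx p_sol.
have : 0 <= g / 2 * dot (p - x) (p - x) by rewrite mulr_ge0 ?divr_ge0 ?dot_ge0 ?ltW.
lra.
Qed.

Lemma Qsol_step_antitone x g g' p p' : 0 < g -> g < g' -> Qsol x g p -> Qsol x g' p' ->
  dot (p' - x) (p' - x) <= dot (p - x) (p - x).
Proof.
move=> g0 gg' [Dp p_min] [Dp' p'_min].
have := p_min p' Dp'; have := p'_min p Dp; rewrite !QobjE.
by set a := dot (p - x) _; set a' := dot (p' - x) _; nra.
Qed.

Lemma Qsol_scaled_step_le x g p : 0 < g -> D x -> Qsol x g p ->
  g * `|p - x| <= 2 * N * `|grad x|.
Proof.
move=> g0 Dx p_sol; have := Qsol_descent Dx p_sol.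
have : - dot (grad x) (p - x) <= N * `|grad x| * `|p - x|.
  by apply: le_trans (ler_norm _) _; rewrite normrN dot_le_norm.
have := sqr_norm_le_dot (p - x).
set dd := dot (p - x) _; set d := `|p - x| => dd_ge desc_bound desc.
apply: ler_cancel_factor; rewrite ?mulr_ge0 ?normr_ge0 //.
have : g * d ^+ 2 <= g * dd by apply: ler_wpM2l => //; exact: ltW.
lra.
Qed.

Lemma Qsol_proj x g p : 0 < g -> Qsol x g p -> Defs.proj D (x - g^-1 *: grad x) p.
Proof.
move=> g0 [Dp p_min]; split=> // q Dq; rewrite ler_enorm.
have := p_min q Dq; rewrite !QobjE.
have E v : x - g^-1 *: grad x - v = - ((v - x) + g^-1 *: grad x).
  by apply/rowP => i; rewrite !mxE; ring.
rewrite !E; move: (p - x) (q - x) (grad x) => P Q G.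
rewrite !dotNl !dotNr !opprK !dotDl !dotDr !dotZl !dotZr (dotC G P) (dotC G Q).
have gV0 : 0 < g^-1 by rewrite invr_gt0.
set a := dot P P; set b := dot Q Q; set c := dot P G; set d := dot Q G => P_le_Q.
have scaled : g^-1 * (c - d) <= g^-1 * (g / 2 * (b - a)) by apply: ler_wpM2l; [exact: ltW | lra].
have cancel : g^-1 * (g / 2 * (b - a)) = (b - a) / 2 by field; rewrite gt_eqF.
lra.
Qed.

Lemma Qsol_rejected x g p (sigma : R) : C1_with_grad phi grad -> 0 < sigma < 1 -> 0 < g ->
  D x -> Qsol x g p -> armijo_fails sigma x p ->
  exists2 c : R, 0 <= c <= 1 &
    (1 - sigma) / 2 * (g * `|p - x|) <= N * `|grad (x + c *: (p - x)) - grad x|.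
Proof.
move=> C1 /andP[s0 s1] g0 Dx p_sol; rewrite /armijo_fails => p_rej.
have [c c01 mvt] := C1_mean_value x p C1; exists c => //.
have := Qsol_descent Dx p_sol.
set G := grad (x + c *: (p - x)) in mvt *.
have GE : dot (G - grad x) (p - x) = phi p - phi x - dot (grad x) (p - x).
  by rewrite dotBl mvt.
have := dot_le_norm (G - grad x) (p - x); have := ler_norm (dot (G - grad x) (p - x)).
have := sqr_norm_le_dot (p - x); have := dot_ge0 (p - x).
set dd := dot (p - x) (p - x); set e := `|p - x| => dd0 edd Gle Gnorm desc.
have s0' : 0 <= 1 - sigma by lra.
have key : (1 - sigma) * g * e ^+ 2 <= (1 - sigma) * g * dd.
  by apply: ler_wpM2l => //; exact: mulr_ge0 s0' (ltW g0).
have desc' : (1 - sigma) * (g / 2 * dd) <= (1 - sigma) * - dot (grad x) (p - x).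
  by apply: ler_wpM2l => //; lra.
rewrite mulrA; apply: ler_cancel_factor; rewrite ?mulr_ge0 ?normr_ge0 //.
lra.
Qed.

End Subproblem.

Section Stationarity.
Context {R : realType} {n : nat}.
Notation W := 'rV[R]_n.
Variables (phi : W -> R) (grad : W -> W) (D : set W).

(* The normal vectors are gm k (z k - q k) with z k the gradient step; the base points
   are pulled from z k towards q k so that they converge to wbar as well. *)
Lemma Mstationary_of_Qsol (x q : nat -> W) (gm : nat -> R) (wbar : W) :
  (forall k, 0 < gm k) -> (forall k, Qsol phi grad D (x k) (gm k) (q k)) ->
  q @ \oo --> wbar -> (fun k => gm k *: (x k - q k)) @ \oo --> (0 : W) ->
  (grad \o x) @ \oo --> grad wbar ->
  Mstationary D grad wbar.
Proof.
move=> gm0 q_sol q_cvg scaled_cvg grad_cvg.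
pose z k := x k - (gm k)^-1 *: grad (x k).
pose t k : R := ((k.+1)%:R * (1 + `|z k - q k|))^-1.
have t_gt0 k : 0 < t k by rewrite invr_gt0 mulr_gt0 ?ltr0n // ltr_wpDr.
have t_le1 k : t k <= 1.
  by rewrite invf_le1 ?mulr_gt0 ?ltr0n ?ltr_wpDr // mulr_ege1 ?ler1n ?lerDl.
have t_small k : `|t k *: (z k - q k)| <= harmonic k.
  rewrite normrZ gtr0_norm // /t invfM /= -mulrA ler_piMr ?invr_ge0 //.
  by rewrite mulrC ler_pdivrMr ?ltr_wpDr // mul1r lerDr.
exists (- grad wbar); split; last by rewrite subrr.
exists (fun k => q k + t k *: (z k - q k)), (fun k => gm k *: (z k - q k)).
split; [|split].
- rewrite -[wbar]addr0; apply: cvgD => //; apply/cvgr0Pnorm_le => e e0.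
  have /cvgr0Pnorm_le /(_ e e0) := @cvg_harmonic R.
  by apply: filterS => k; apply: le_trans; rewrite (le_trans _ (ler_norm _)).
- have -> : (fun k => gm k *: (z k - q k)) = (fun k => gm k *: (x k - q k) - grad (x k)).
    apply/funext => k; rewrite /z !scalerBr scalerA mulfV ?gt_eqF // scale1r.
    by rewrite addrAC.
  by rewrite -[- grad wbar]add0r; apply: cvgB.
- move=> k; exists (gm k / t k), (t k *: (z k - q k)); split.
    by rewrite divr_ge0 ?ltW.
  split; last by rewrite scalerA mulfVK ?gt_eqF.
  exists (q k); split; last by rewrite [RHS]addrC addKr.
  apply: (proj_segment (Qsol_proj (gm0 k) (q_sol k))).
  by rewrite ltW ?t_le1.
Qed.

End Stationarity.

Lemma continuous_at_dist_le {R : realType} {V U : normedModType R} (f : V -> U) x :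
  {for x, continuous f} ->
  forall e, 0 < e -> exists2 d, 0 < d & forall y, `|y - x| <= d -> `|f y - f x| <= e.
Proof.
move=> /cvgrPdist_le f_cont e e0; have := f_cont e e0.
rewrite nearE => /nbhs_ballP[d /= d0 f_ball]; exists (d / 2); first by rewrite divr_gt0.
move=> y yx; rewrite distrC; apply: f_ball; rewrite -ball_normE /= distrC.
by apply: le_lt_trans yx _; rewrite ltr_pdivrMr // ltr_pMr // ltr1n.
Qed.

Section RejectedSteps.
Context {R : realType} {n : nat}.
Notation W := 'rV[R]_n.
Local Notation N := (n.+1%:R : R).
Variables (phi : W -> R) (grad : W -> W) (D : set W) (sigma : R).
Hypotheses (phi_C1 : C1_with_grad phi grad) (sigma01 : 0 < sigma < 1).

(* Rejection forces [g |p - x|] below the oscillation of [grad] on the segment [x, p], and a large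
   [g] keeps that segment inside a small ball around [wbar]. *)
Lemma rejected_scaled_step_small wbar e : 0 < e ->
  exists d Gam : R, [/\ 0 < d, 0 < Gam & forall x g p, D x -> `|x - wbar| <= d -> Gam <= g ->
    Qsol phi grad D x g p -> armijo_fails phi grad sigma x p -> g * `|p - x| <= e].
Proof.
move=> e0; have [s0 s1] := andP sigma01.
have N0 : 0 < N by rewrite ltr0n.
pose eta := (1 - sigma) * e / (4 * N).
have eta0 : 0 < eta by rewrite /eta !mulr_gt0 ?invr_gt0 ?mulr_gt0 //; lra.
have [d0 d00 grad_near] := continuous_at_dist_le (proj1 phi_C1 wbar) eta0.
pose B := `|grad wbar| + eta.
pose Gam := 4 * N * B / d0 + 1.
have B0 : 0 <= B by rewrite addr_ge0 ?normr_ge0 ?ltW.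
have Gam0 : 0 < Gam.
  have : 0 <= 4 * N * B / d0 by rewrite divr_ge0 ?mulr_ge0 // ltW.
  rewrite /Gam; lra.
exists (d0 / 2), Gam; split; rewrite ?divr_gt0 // => x g p Dx x_near gGam p_sol p_rej.
have g0 : 0 < g by apply: lt_le_trans gGam.
have grad_x : `|grad x - grad wbar| <= eta by apply: grad_near; lra.
have grad_xB : `|grad x| <= B.
  by rewrite -[grad x](subrK (grad wbar)) /B; apply: le_trans (ler_normD _ _) _; lra.
have step_bound : g * `|p - x| <= 2 * N * B.
  apply: le_trans (Qsol_scaled_step_le g0 Dx p_sol) _.
  by apply: ler_wpM2l; rewrite ?mulr_ge0 ?ler0n.
have step_small : `|p - x| <= d0 / 2.
  have := ler_wpM2r (normr_ge0 (p - x)) gGam.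
  have : Gam * (d0 / 2) = 2 * N * B + d0 / 2 by rewrite /Gam; field; rewrite gt_eqF.
  by move=> GamE GamLe; rewrite -(ler_pM2l Gam0); lra.
have [c /andP[c0 c1] osc] := Qsol_rejected phi_C1 sigma01 g0 Dx p_sol p_rej.
have xi_near : `|x + c *: (p - x) - wbar| <= d0.
  rewrite [x + _ - _]addrAC; apply: le_trans (ler_normD _ _) _; rewrite normrZ ger0_norm //.
  have : c * `|p - x| <= `|p - x| by rewrite ler_piMl.
  lra.
have osc_small : `|grad (x + c *: (p - x)) - grad x| <= 2 * eta.
  rewrite -(subrKA (grad wbar)); apply: le_trans (ler_normD _ _) _.
  by rewrite [`|grad wbar - _|]distrC; have := grad_near _ xi_near; lra.
have : (1 - sigma) / 2 * (g * `|p - x|) <= (1 - sigma) / 2 * e.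
  have -> : (1 - sigma) / 2 * e = N * (2 * eta) by rewrite /eta; field; rewrite gt_eqF.
  exact: le_trans osc (ler_wpM2l (ltW N0) osc_small).
by rewrite ler_pM2l // divr_gt0 //; lra.
Qed.

Lemma nonterminating_inner_loop x (q : nat -> W) (gm : nat -> R) :
  D x -> (forall i, 0 < gm i) -> gm @ \oo --> +oo ->
  (forall i, Qsol phi grad D x (gm i) (q i)) ->
  (forall i, armijo_fails phi grad sigma x (q i)) ->
  [/\ q @ \oo --> x, Mstationary D grad x &
      (fun i => enorm (gm i *: (x - q i) + grad (q i) - grad x)) @ \oo --> 0].
Proof.
move=> Dx gm0 gm_oo q_sol q_rej.
have scaled_cvg : (fun i => gm i *: (x - q i)) @ \oo --> (0 : W).
  apply/cvgr0Pnorm_le => e e0.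
  have [d [Gam [d0 _ small]]] := rejected_scaled_step_small x e0.
  move/cvgryPge : gm_oo => /(_ Gam); apply: filterS => i Gam_le.
  rewrite normrZ gtr0_norm // -normrN opprB.
  by apply: (small _ _ _ Dx _ Gam_le (q_sol i) (q_rej i)); rewrite subrr normr0 ltW.
have q_cvg : q @ \oo --> x.
  apply/cvgrPdist_le => e e0.
  move/cvgr0Pnorm_le : scaled_cvg => /(_ e e0); move/cvgryPge : gm_oo => /(_ 1).
  apply: filterS2 => i gm1; rewrite normrZ gtr0_norm //.
  by apply: le_trans; rewrite ler_peMl.
have grad_cvg : (grad \o q) @ \oo --> grad x := cvg_comp _ _ q_cvg (proj1 phi_C1 x).
split => //.
  exact: (Mstationary_of_Qsol (x := fun=> x)) gm0 q_sol q_cvg scaled_cvg (cvg_cst _).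
apply/cvgr0Pnorm_le => e e0.
have v_cvg : (fun i => gm i *: (x - q i) + (grad (q i) - grad x)) @ \oo --> (0 : W).
  rewrite -[X in _ --> X](subrr (grad x)) -[X in _ --> X]add0r.
  by apply: cvgD => //; apply: cvgB grad_cvg (cvg_cst _).
have N0 : 0 < N by rewrite ltr0n.
move/cvgr0Pnorm_le : v_cvg => /(_ (e / N) (divr_gt0 e0 N0)); apply: filterS => i vi.
rewrite ger0_norm ?enorm_ge0 // -addrA; apply: le_trans (enorm_le_norm _) _.
by apply: le_trans (ler_wpM2l (ltW N0) vi) _; rewrite mulrC divfK ?gt_eqF.
Qed.

End RejectedSteps.

Section NonmonotoneDescent.
Context {R : realType}.
Variables (f r d : nat -> R) (m : nat) (c L : R).
Hypotheses (c_gt0 : 0 < c) (L_ge0 : 0 <= L).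
Hypothesis decrease : forall k, f k.+1 <= r k - c * d k ^+ 2.
Hypothesis d_ge0 : forall k, 0 <= d k.
Hypothesis f_lipschitz : forall k, `|f k - f k.+1| <= L * d k.
Hypothesis r_noninc : forall k, r k.+1 <= r k.
Hypothesis r_lbound : has_lbound (range r).
Hypothesis r_window : forall k, exists i, [/\ (i <= m)%N, (i <= k)%N & r k = f (k - i)%N].

Let lr := inf (range r).

Let r_cvg : r @ \oo --> lr.
Proof. by apply: nonincreasing_cvgn => //; apply/nonincreasing_seqP. Qed.

Lemma nonmonotone_step (h : nat -> nat) : (forall j, (j <= h j)%N) ->
  (fun j => f (h j).+1) @ \oo --> lr ->
  (fun j => d (h j)) @ \oo --> 0 /\ (fun j => f (h j)) @ \oo --> lr.
Proof.
move=> h_ge f_next.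
have gap : (fun j => r (h j) - f (h j).+1) @ \oo --> 0.
  by rewrite -(subrr lr); apply: cvgB (cvg_comp_geq h_ge r_cvg) f_next.
have d_cvg : (fun j => d (h j)) @ \oo --> 0.
  apply/cvgr0Pnorm_le => e e0.
  move/cvgr0Pnorm_le : gap => /(_ (c * e ^+ 2) (mulr_gt0 c_gt0 (exprn_gt0 2 e0))).
  apply: filterS => j gap_j; rewrite ger0_norm //.
  rewrite -(ler_pXn2r (n := 2)) ?nnegrE ?(ltW e0) // -(ler_pM2l c_gt0).
  by have := decrease (h j); have := ler_norm (r (h j) - f (h j).+1); lra.
split => //; apply: cvg_sub0 f_next; apply/cvgr0Pnorm_le => e e0.
have L1 : 0 < L + 1 by rewrite ltr_wpDl.
move/cvgr0Pnorm_le : d_cvg => /(_ (e / (L + 1)) (divr_gt0 e0 L1)).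
apply: filterS => j d_j; apply: le_trans (f_lipschitz (h j)) _.
rewrite ger0_norm // in d_j; apply: le_trans (ler_wpM2l L_ge0 d_j) _.
by rewrite mulrA ler_pdivrMr //; lra.
Qed.

(* Grippo--Lampariello--Lucidi: [l j] attains the reference value [r (j + 2m + 2)]; walking down
   from it one index at a time gives [f -> lim r] and [d -> 0] on the window [l j - (m + 1), l j),
   and every large index lies in such a window. *)
Lemma nonmonotone_descent_cvg : d @ \oo --> 0.
Proof.
have /choice [i i_spec] := r_window.
pose l j := (j + m.*2.+2 - i (j + m.*2.+2))%N.
have l_ge j : (j + m.+2 <= l j)%N by have [? ? _] := i_spec (j + m.*2.+2)%N; rewrite /l; lia.
have l_le j : (l j <= j + m.*2.+2)%N by rewrite /l; lia.
have window_step k : (k <= m)%N -> (fun j => f (l j - k)%N) @ \oo --> lr ->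
    (fun j => d (l j - k.+1)%N) @ \oo --> 0 /\ (fun j => f (l j - k.+1)%N) @ \oo --> lr.
  move=> km f_k; apply: nonmonotone_step => [j|]; first by have := l_ge j; lia.
  suff -> : (fun j => f (l j - k.+1).+1) = (fun j => f (l j - k)%N) by [].
  by apply/funext => j; rewrite subnSK //; have := l_ge j; lia.
have f_window k : (k <= m.+1)%N -> (fun j => f (l j - k)%N) @ \oo --> lr.
  elim: k => [_|k IH km]; last exact: (window_step k km (IH (ltnW km))).2.
  suff -> : (fun j => f (l j - 0)%N) = (fun j => r (j + m.*2.+2)%N).
    by apply: cvg_comp_geq r_cvg => j; rewrite leq_addr.
  by apply/funext => j; have [_ _ ->] := i_spec (j + m.*2.+2)%N; rewrite subn0.
apply/cvgr0Pnorm_le => e e0.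
have d_window : \forall j \near \oo, forall k : 'I_m.+1, `|d (l j - k.+1)%N| <= e.
  apply: filter_forall => k; have km : (k <= m)%N by rewrite -ltnS.
  by move/cvgr0Pnorm_le : (window_step k km (f_window k (leqW km))).1; apply.
apply: filterS2 (nbhs_infty_ge m.+1) (cvg_subnr m.+1 _ d_window) => k km /= d_k.
have lk : ((l (k - m.+1) - k).-1 < m.+1)%N by have := l_le (k - m.+1)%N; lia.
have := d_k (Ordinal lk); congr (`|d _| <= e).
by have := l_ge (k - m.+1)%N; rewrite /=; lia.
Qed.

End NonmonotoneDescent.

Section ReferenceValue.
Context {R : realType} {n : nat}.
Variables (phi : 'rV[R]_n -> R) (w : nat -> 'rV[R]_n) (m : nat).

Lemma refval_ge j i : (i <= minn j m)%N -> phi (w (j - i)%N) <= refval phi w m j.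
Proof.
rewrite -ltnS => ij.
exact: (le_bigmax _ (fun i : 'I_(minn j m).+1 => phi (w (j - i)%N)) (Ordinal ij)).
Qed.

Lemma refval_self j : phi (w j) <= refval phi w m j.
Proof. by have := @refval_ge j 0 (leq0n _); rewrite subn0. Qed.

Lemma refval_le j b : (forall i, (i <= minn j m)%N -> phi (w (j - i)%N) <= b) ->
  refval phi w m j <= b.
Proof.
move=> win_le; apply: bigmax_le => [|[i ij] _ /=]; last by apply: win_le; rewrite -ltnS.
by have := win_le 0%N (leq0n _); rewrite subn0.
Qed.

Lemma refval_attained j :
  exists i, [/\ (i <= m)%N, (i <= j)%N & refval phi w m j = phi (w (j - i)%N)].
Proof.
apply: (big_ind (fun v => exists i, [/\ (i <= m)%N, (i <= j)%N & v = phi (w (j - i)%N)])).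
- by exists 0%N; rewrite subn0.
- move=> _ _ [i1 [i1m i1j ->]] [i2 [i2m i2j ->]].
  by have [_|_] := leP (phi (w (j - i1)%N)) (phi (w (j - i2)%N)); [exists i2 | exists i1].
- move=> [i /= ij] _; exists i; move: ij; rewrite ltnS leq_min.
  by case/andP.
Qed.

Lemma refval_noninc j : phi (w j.+1) <= refval phi w m j ->
  refval phi w m j.+1 <= refval phi w m j.
Proof.
move=> next_le; apply: refval_le => -[|i] ij; first by rewrite subn0.
by rewrite subSS; apply: refval_ge; move: ij; rewrite !leq_min; lia.
Qed.

End ReferenceValue.

Section Compactness.
Context {R : realType} {n : nat}.
Notation W := 'rV[R]_n.

Lemma compact_norm_le (M : R) : compact [set v : W | `|v| <= M].
Proof.
apply: bounded_closed_compact.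
  exists M; split; first exact: num_real.
  by move=> x Mx v /= vM; apply: le_trans (ltW Mx).
exact: (@preimage_closed _ _ (fun v : W => `|v|) [set x : R | x <= M]
  (fun x _ => @norm_continuous _ _ x) (closed_le (y := M))).
Qed.

Lemma continuous_bounded_on_ball {V : normedModType R} (f : W -> V) (M : R) :
  continuous f -> exists2 G, 0 <= G & forall v, `|v| <= M -> `|f v| <= G.
Proof.
move=> f_cont.
have := continuous_compact (continuous_subspaceT f_cont) (compact_norm_le (M := M)).
move=> /compact_bounded[G [G_real G_bound]].
exists (`|G| + 1); first by rewrite addr_ge0 ?normr_ge0.
move=> v vM; apply: (G_bound (`|G| + 1)); last by exists v.
by apply: le_lt_trans (real_ler_norm G_real) _; rewrite ltrDl.
Qed.

(* Bolzano--Weierstrass: the [k]-th index of the subsequence is a later visit of the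
   [1/(k+1)]-ball around a cluster point. *)
Lemma bounded_cvg_subseq (u : nat -> W) (M : R) : (forall k, `|u k| <= M) ->
  exists (s : nat -> nat) (l : W), (forall k, (s k < s k.+1)%N) /\ (u \o s) @ \oo --> l.
Proof.
move=> u_bounded.
have u_ball : (u @ \oo) [set v | `|v| <= M] by exists 0%N => // k _; apply: u_bounded.
have [l [_ l_cluster]] := compact_norm_le _ u_ball.
have visit (Nk : nat * nat) : exists j, (Nk.1 < j)%N /\ `|u j - l| < harmonic Nk.2.
  case: (l_cluster (u @` [set j | (Nk.1 < j)%N]) (ball l (harmonic Nk.2))).
  - by exists Nk.1.+1 => // j /= Nj; exists j.
  - by apply: nbhsx_ballx; rewrite invr_gt0 ltr0n.
  by move=> y [[j /= Nj <-]]; rewrite -ball_normE /= distrC; exists j.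
have /choice [next next_spec] := visit.
pose fix s k := if k is k'.+1 then next (s k', k) else next (0%N, 0%N).
exists s, l; split=> [k|]; first exact: (next_spec (s k, k.+1)).1.
apply/cvgrPdist_le => e e0.
move/cvgr0Pnorm_le : (@cvg_harmonic R) => /(_ e e0); apply: filterS => k hk.
rewrite distrC; apply: le_trans (ltW _) (le_trans (ler_norm _) hk).
by case: k {hk} => [|k]; [exact: (next_spec (0%N, 0%N)).2 | exact: (next_spec (s k, k.+1)).2].
Qed.

End Compactness.

Lemma C1_lipschitz_on_ball {R : realType} {n : nat} (phi : 'rV[R]_n -> R) grad (M : R) :
  C1_with_grad phi grad -> exists2 L, 0 <= L &
    forall x y, `|x| <= M -> `|y| <= M -> `|phi y - phi x| <= L * `|y - x|.
Proof.
move=> phi_C1; have [G G0 grad_bounded] := continuous_bounded_on_ball M (proj1 phi_C1).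
exists (n.+1%:R * G) => [|x y xM yM]; first by rewrite mulr_ge0.
have [c /andP[c0 c1] ->] := C1_mean_value x y phi_C1.
apply: le_trans (dot_le_norm _ _) _; rewrite ler_wpM2r ?normr_ge0 // ler_wpM2l //.
apply: grad_bounded; have -> : x + c *: (y - x) = (1 - c) *: x + c *: y.
  by rewrite scalerBr scalerBl scale1r addrAC addrA.
apply: le_trans (ler_normD _ _) _; rewrite !normrZ !ger0_norm ?subr_ge0 //.
have := ler_wpM2l (c0 : 0 <= c) yM; have := ler_wpM2l (_ : 0 <= 1 - c) xM.
by rewrite subr_ge0 => /(_ c1); lra.
Qed.

Section OuterIterates.
Context {R : realType} {n : nat}.
Notation W := 'rV[R]_n.
Local Notation N := (n.+1%:R : R).
Variables (phi : W -> R) (grad : W -> W) (D : set W).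
Variables (sigma tau gmin gmax M : R) (m : nat) (w : nat -> W) (gm : nat -> R).
Hypotheses (phi_C1 : C1_with_grad phi grad) (sigma01 : 0 < sigma < 1).
Hypotheses (tau_gt1 : 1 < tau) (gmin_gt0 : 0 < gmin) (gmin_le_gmax : gmin <= gmax).
Hypothesis w_in_D : forall j, D (w j).
Hypothesis w_bounded : forall j, `|w j| <= M.
Hypothesis gm_ge : forall j, gmin <= gm j.
Hypothesis w_next_sol : forall j, Qsol phi grad D (w j) (gm j) (w j.+1).
Hypothesis w_next_accepted : forall j,
  phi (w j.+1) <= refval phi w m j + sigma * dot (grad (w j)) (w j.+1 - w j).
(* Either the first trial value was accepted, or the previous trial [gm j / tau] was rejected. *)
Hypothesis gm_backtracked : forall j, gm j <= gmax \/ exists (gh : R) (p : W),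
  [/\ 0 < gh, gm j = tau * gh, Qsol phi grad D (w j) gh p & armijo_fails phi grad sigma (w j) p].

Let gm_gt0 j : 0 < gm j := lt_le_trans gmin_gt0 (gm_ge j).

Lemma outer_sufficient_decrease j :
  phi (w j.+1) <= refval phi w m j - sigma * gmin / 2 * `|w j.+1 - w j| ^+ 2.
Proof.
have [s0 _] := andP sigma01.
have := Qsol_descent (w_in_D j) (w_next_sol j); have := w_next_accepted j.
have := sqr_norm_le_dot (w j.+1 - w j).
set dd := dot (w j.+1 - w j) _; set d := `|_| => d_dd accepted desc.
have : gmin * d ^+ 2 <= gm j * dd.
  by apply: ler_pM => //; [exact: ltW | exact: sqr_ge0].
move/(ler_wpM2l (ltW s0)) => /= ?.
have : sigma * (dot (grad (w j)) (w j.+1 - w j) + gm j / 2 * dd) <= 0.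
  by apply: mulr_ge0_le0 => //; exact: ltW.
lra.
Qed.

Lemma outer_steps_cvg0 : (fun j => w j.+1 - w j) @ \oo --> (0 : W).
Proof.
have [s0 _] := andP sigma01.
have [L L0 lip] := C1_lipschitz_on_ball M phi_C1.
have noninc j : refval phi w m j.+1 <= refval phi w m j.
  apply: refval_noninc; apply: le_trans (outer_sufficient_decrease j) _.
  by rewrite gerBl mulr_ge0 ?sqr_ge0 // divr_ge0 ?mulr_ge0 ?ltW.
have lbound : has_lbound (range (refval phi w m)).
  exists (phi (w 0%N) - L * (M + M)) => _ [j _ <-]; apply: le_trans (refval_self _ _ _ j).
  have := lip _ _ (w_bounded 0%N) (w_bounded j); rewrite ler_norml => /andP[lip_j _].
  have : L * `|w j - w 0%N| <= L * (M + M).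
    by rewrite ler_wpM2l // (le_trans (ler_normB _ _)) ?lerD.
  lra.
have c_gt0 : 0 < sigma * gmin / 2 by rewrite !mulr_gt0.
have lip_step j : `|(phi \o w) j - (phi \o w) j.+1| <= L * `|w j.+1 - w j|.
  by rewrite distrC lip.
have steps := nonmonotone_descent_cvg (f := phi \o w) (d := fun j => `|w j.+1 - w j|)
  c_gt0 L0 outer_sufficient_decrease (fun j => normr_ge0 _) lip_step noninc lbound
  (refval_attained phi w m).
apply/cvgr0Pnorm_le => e e0; move/cvgr0Pnorm_le : steps => /(_ e e0).
by apply: filterS => j; rewrite normr_id.
Qed.

Lemma outer_scaled_step_le j (Gam e : R) : 0 <= Gam -> 0 <= e ->
  (forall g p, Gam <= g -> Qsol phi grad D (w j) g p -> armijo_fails phi grad sigma (w j) p ->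
     g * `|p - w j| <= e) ->
  gm j * `|w j.+1 - w j| <= (gmax + tau * Gam) * `|w j.+1 - w j| + tau * (N * e).
Proof.
move=> Gam0 e0 small; have tau0 : 0 < tau := lt_trans ltr01 tau_gt1.
have N0 : 0 < N by rewrite ltr0n.
have gmax0 : 0 <= gmax by apply: le_trans (ltW gmin_gt0) gmin_le_gmax.
have := normr_ge0 (w j.+1 - w j); set st := `|w j.+1 - w j| => st0.
have := mulr_ge0 (ltW tau0) (mulr_ge0 (ltW N0) e0).
have := mulr_ge0 gmax0 st0; have := mulr_ge0 (mulr_ge0 (ltW tau0) Gam0) st0.
move=> ? ? ?; case: (gm_backtracked j) => [gm_le | [gh [p [gh0 gmE p_sol p_rej]]]].
  by have := ler_wpM2r st0 gm_le; lra.
have [gh_small | gh_large] : gh <= Gam \/ Gam <= gh by apply/orP; exact: le_total.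
  have : gm j * st <= tau * Gam * st.
    by rewrite gmE; apply: (ler_wpM2r st0); exact: (ler_wpM2l (ltW tau0)).
  lra.
have step_le : st <= N * `|p - w j|.
  apply: norm_le_of_dot_le; apply: (Qsol_step_antitone gh0 _ p_sol (w_next_sol j)).
  by rewrite gmE -[X in X < _]mul1r (ltr_pM2r gh0).
have gh_st : gh * st <= N * (gh * `|p - w j|).
  by rewrite mulrCA; exact: (ler_wpM2l (ltW gh0) step_le).
have : gm j * st <= tau * (N * (gh * `|p - w j|)).
  by rewrite gmE -mulrA; exact: (ler_wpM2l (ltW tau0) gh_st).
have := ler_wpM2l (ltW tau0) (ler_wpM2l (ltW N0) (small _ _ gh_large p_sol p_rej)).
lra.
Qed.

Lemma outer_scaled_steps_cvg0 (s : nat -> nat) (wbar : W) : (forall k, (s k < s k.+1)%N) ->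
  (w \o s) @ \oo --> wbar -> (fun k => gm (s k) *: (w (s k).+1 - w (s k))) @ \oo --> (0 : W).
Proof.
move=> s_incr ws_cvg; apply/cvgr0Pnorm_le => e e0.
have tau0 : 0 < tau := lt_trans ltr01 tau_gt1.
have N0 : 0 < N by rewrite ltr0n.
pose e' := e / (2 * (tau * N)).
have e'0 : 0 < e' by rewrite divr_gt0 // !mulr_gt0.
have [d [Gam [d0 Gam0 small]]] := rejected_scaled_step_small D phi_C1 sigma01 wbar e'0.
pose K := gmax + tau * Gam.
have K0 : 0 < K by rewrite /K ltr_wpDl ?mulr_gt0 // (le_trans (ltW gmin_gt0)).
have near_wbar : \forall k \near \oo, `|w (s k) - wbar| <= d.
  by move/cvgrPdist_le : ws_cvg => /(_ d d0); apply: filterS => k; rewrite distrC.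
have small_step : \forall k \near \oo, `|w (s k).+1 - w (s k)| <= e / (2 * K).
  move/cvgr0Pnorm_le : (cvg_comp_geq (incr_geq s_incr) outer_steps_cvg0).
  by apply; rewrite divr_gt0 ?mulr_gt0.
apply: filterS2 near_wbar small_step => k k_near k_step.
rewrite normrZ gtr0_norm //.
apply: le_trans (outer_scaled_step_le (ltW Gam0) (ltW e'0) _) _.
  by move=> g p gGam; apply: small => //; apply: w_in_D.
have := ler_wpM2l (ltW K0) k_step.
have -> : K * (e / (2 * K)) = e / 2 by field; rewrite gt_eqF.
have -> : tau * (N * e') = e / 2 by rewrite /e'; field; rewrite !gt_eqF.
rewrite -/K; lra.
Qed.

Lemma outer_limit_Mstationary (s : nat -> nat) (wbar : W) : (forall k, (s k < s k.+1)%N) ->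
  (w \o s) @ \oo --> wbar -> Mstationary D grad wbar.
Proof.
move=> s_incr ws_cvg.
apply: (Mstationary_of_Qsol (x := w \o s) (q := fun k => w (s k).+1) (gm := gm \o s)).
- by move=> k; apply: gm_gt0.
- by move=> k; apply: w_next_sol.
- have -> : (fun k => w (s k).+1) = (fun k => w (s k) + (w (s k).+1 - w (s k))).
    by apply/funext => k; rewrite addrC subrK.
  rewrite -[wbar]addr0; apply: cvgD ws_cvg _.
  exact: cvg_comp_geq (incr_geq s_incr) outer_steps_cvg0.
- have -> : (fun k => (gm \o s) k *: ((w \o s) k - w (s k).+1)) =
            (fun k => - (gm (s k) *: (w (s k).+1 - w (s k)))).
    by apply/funext => k /=; rewrite -scalerN opprB.
  rewrite -oppr0; exact: cvgN (outer_scaled_steps_cvg0 s_incr ws_cvg).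
- exact: cvg_comp _ _ ws_cvg (proj1 phi_C1 wbar).
Qed.

End OuterIterates.

Section Algorithm1Run.
Context {R : realType} {n : nat}.
Notation W := 'rV[R]_n.
Variables (phi : W -> R) (grad : W -> W) (D : set W).
Variables (tau sigma gmin gmax : R) (m : nat) (w0 : W).
Variables (w : nat -> W) (g0 : nat -> R) (wi : nat -> nat -> W) (ij : nat -> nat).
Hypotheses (tau_gt1 : 1 < tau) (sigma01 : 0 < sigma < 1) (gmin_gt0 : 0 < gmin) (D_w0 : D w0).
Hypothesis run : alg1_run phi grad D tau sigma gmin gmax m w0 w g0 wi ij.

Local Notation reached := (reached phi grad sigma m w wi).
Local Notation terminates := (terminates phi grad sigma m w wi).
Local Notation accept := (accept phi grad sigma m w wi).

Lemma reached_pred j : reached j.+1 -> reached j.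
Proof. by move=> rj k kj; apply: rj; apply: ltnW. Qed.

Lemma run_g0_gt0 j : reached j -> 0 < g0 j.
Proof. by move=> rj; have [/andP[g0_ge _] _ _] := run.2 j rj; apply: lt_le_trans g0_ge. Qed.

Lemma run_gam_gt0 j i : reached j -> 0 < gam tau g0 j i.
Proof.
by move=> rj; rewrite /gam mulr_gt0 ?exprn_gt0 ?run_g0_gt0 // (lt_trans ltr01 tau_gt1).
Qed.

Lemma run_Qsol j i : reached j -> (1 <= i)%N ->
  Qsol phi grad D (w j) (gam tau g0 j i) (wi j i).
Proof. by move=> rj i1; have [_ sol _] := run.2 j rj; apply: sol. Qed.

Lemma run_in_D j : reached j -> D (w j).
Proof.
elim: j => [_|j IH rj]; first by rewrite run.1.
have [_ _ step] := run.2 j (reached_pred rj).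
have [ij1 _ _ ->] := step (rj j (ltnSn j)).
by have [] := run_Qsol (reached_pred rj) ij1.
Qed.

(* The reference value dominates [phi (w j)], so a rejected trial point fails the monotone test too. *)
Lemma rejected_armijo_fails j i : ~ accept j i -> armijo_fails phi grad sigma (w j) (wi j i).
Proof.
move=> rej; rewrite /armijo_fails ltNge; apply/negP => le_ref; apply: rej.
by apply: le_trans le_ref _; rewrite lerD2r refval_self.
Qed.

Lemma run_nonterminating j : C1_with_grad phi grad -> reached j -> ~ terminates j ->
  [/\ wi j @ \oo --> w j, Mstationary D grad (w j) &
      (fun i => enorm (gam tau g0 j i *: (w j - wi j i) + grad (wi j i) - grad (w j)))
        @ \oo --> 0].
Proof.
move=> phi_C1 rj stuck.
pose gm i := gam tau g0 j i.+1.
have tau_gt0 : 0 < tau := lt_trans ltr01 tau_gt1.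
have gm_oo : gm @ \oo --> +oo.
  have -> : gm = (fun i => (geometric (g0 j)^-1 tau^-1 i)^-1).
    by apply/funext => i; rewrite /gm /gam /= invfM exprVn !invrK mulrC.
  apply/cvgrVy; first by apply: nearW => i; rewrite mulr_gt0 ?exprn_gt0 ?invr_gt0 ?run_g0_gt0.
  by apply: cvg_geometric; rewrite ger0_norm ?invr_ge0 ?ltW // invf_lt1.
have [q_cvg stat res_cvg] := nonterminating_inner_loop phi_C1 sigma01 (run_in_D rj)
  (fun i => run_gam_gt0 i.+1 rj) gm_oo (fun i => run_Qsol (i := i.+1) rj isT)
  (fun i => rejected_armijo_fails (fun acc => stuck (ex_intro _ i.+1 (conj isT acc)))).
by split => //; rewrite -cvg_shiftS.
Qed.

Section AllTerminate.
Hypothesis all_terminate : forall j, terminates j.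

Let reached_all j : reached j := fun k _ => all_terminate k.

Let run_step j : [/\ (1 <= ij j)%N, accept j (ij j),
    (forall i, (1 <= i < ij j)%N -> ~ accept j i) & w j.+1 = wi j (ij j)].
Proof. by have [_ _ step] := run.2 j (@reached_all j); apply: step. Qed.

Lemma run_next_Qsol j : Qsol phi grad D (w j) (gam tau g0 j (ij j)) (w j.+1).
Proof. by have [ij1 _ _ ->] := run_step j; apply: run_Qsol. Qed.

Lemma run_next_accepted j :
  phi (w j.+1) <= refval phi w m j + sigma * dot (grad (w j)) (w j.+1 - w j).
Proof. by have [_ acc _ ->] := run_step j. Qed.

Lemma run_gam_ge j : gmin <= gam tau g0 j (ij j).
Proof.
have [/andP[g0_ge _] _ _] := run.2 j (@reached_all j).
rewrite /gam; apply: (le_trans g0_ge); rewrite ler_peMl ?exprn_ege1 ?(ltW tau_gt1) //.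
exact: le_trans (ltW gmin_gt0) g0_ge.
Qed.

Lemma run_backtracked j : gam tau g0 j (ij j) <= gmax \/ exists (gh : R) (p : W),
  [/\ 0 < gh, gam tau g0 j (ij j) = tau * gh, Qsol phi grad D (w j) gh p &
     armijo_fails phi grad sigma (w j) p].
Proof.
have [ij1 _ not_acc _] := run_step j; have [/andP[_ g0_le] _ _] := run.2 j (@reached_all j).
move: ij1 not_acc; case: (ij j) => [|[|i]] // _ not_acc.
  by left; rewrite /gam expr0 mul1r.
right; exists (gam tau g0 j i.+1), (wi j i.+1); split.
- exact: run_gam_gt0.
- by rewrite /gam exprS mulrA.
- exact: run_Qsol.
- by apply: rejected_armijo_fails; apply: not_acc; rewrite /= ltnS leqnn.
Qed.

Lemma run_sublevel j : phi (w j) <= phi w0.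
Proof.
have [s0 _] := andP sigma01.
elim: j {-2}j (leqnn j) => [k|j IH k]; first by rewrite leqn0 => /eqP ->; rewrite run.1.
rewrite leq_eqVlt => /orP[/eqP -> {k} | ]; last exact: IH.
have ref_le : refval phi w m j <= phi w0 by apply: refval_le => i _; apply/IH/leq_subr.
have := Qsol_dot_le0 (run_gam_gt0 (ij j) (@reached_all j)) (run_in_D (@reached_all j))
  (run_next_Qsol j).
move/(mulr_ge0_le0 (ltW s0)); have := run_next_accepted j.
lra.
Qed.

Lemma run_all_terminate (M : R) : C1_with_grad phi grad -> gmin <= gmax ->
  (forall v, D v -> phi v <= phi w0 -> enorm v <= M) ->
  (exists (s : nat -> nat) (wbar : W), (forall k, (s k < s k.+1)%N) /\ (w \o s) @ \oo --> wbar) /\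
  (forall (s : nat -> nat) (wbar : W), (forall k, (s k < s k.+1)%N) -> (w \o s) @ \oo --> wbar ->
     Mstationary D grad wbar /\
     (fun k => gam tau g0 (s k) (ij (s k)) *: (w (s k).+1 - w (s k))) @ \oo --> (0 : W)).
Proof.
move=> phi_C1 gmin_le_gmax sublevel_bounded.
have w_in_D j : D (w j) := run_in_D (@reached_all j).
have w_bounded j : `|w j| <= M.
  exact: le_trans (norm_le_enorm _) (sublevel_bounded _ (w_in_D j) (run_sublevel j)).
split=> [|s wbar s_incr ws_cvg]; first exact: bounded_cvg_subseq w_bounded.
split.
- exact: (outer_limit_Mstationary phi_C1 sigma01 tau_gt1 gmin_gt0 gmin_le_gmax w_in_D
    w_bounded run_gam_ge run_next_Qsol run_next_accepted run_backtracked s_incr ws_cvg).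
- exact: (outer_scaled_steps_cvg0 phi_C1 sigma01 tau_gt1 gmin_gt0 gmin_le_gmax w_in_D
    w_bounded run_gam_ge run_next_Qsol run_next_accepted run_backtracked s_incr ws_cvg).
Qed.

End AllTerminate.

End Algorithm1Run.

Theorem mainTheorem6 (R : realType) (n : nat)
  (phi : 'rV[R]_n -> R) (grad : 'rV[R]_n -> 'rV[R]_n) (D : set 'rV[R]_n)
  (tau sigma gmin gmax : R) (m : nat) (w0 : 'rV[R]_n)
  (w : nat -> 'rV[R]_n) (g0 : nat -> R) (wi : nat -> nat -> 'rV[R]_n)
  (ij : nat -> nat) :
  C1_with_grad phi grad ->
  closed D ->
  1 < tau -> 0 < sigma < 1 -> 0 < gmin -> gmin <= gmax ->
  D w0 ->
  (exists M : R, forall v, D v -> phi v <= phi w0 -> enorm v <= M) ->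
  alg1_run phi grad D tau sigma gmin gmax m w0 w g0 wi ij ->
  (forall j, reached phi grad sigma m w wi j ->
     ~ terminates phi grad sigma m w wi j ->
     [/\ wi j @ \oo --> w j,
         Mstationary D grad (w j) &
         (fun i => enorm (gam tau g0 j i *: (w j - wi j i) + grad (wi j i) - grad (w j)))
           @ \oo --> 0]) /\
  ((forall j, terminates phi grad sigma m w wi j) ->
     (exists (s : nat -> nat) (wbar : 'rV[R]_n),
        (forall k, (s k < s k.+1)%N) /\ (w \o s) @ \oo --> wbar) /\
     (forall (s : nat -> nat) (wbar : 'rV[R]_n),
        (forall k, (s k < s k.+1)%N) -> (w \o s) @ \oo --> wbar ->
        Mstationary D grad wbar /\
        (fun k => gam tau g0 (s k) (ij (s k)) *: (w (s k).+1 - w (s k))) @ \oo --> (0 : 'rV[R]_n))).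
Proof.
move=> phi_C1 _ tau_gt1 sigma01 gmin_gt0 gmin_le_gmax D_w0 [M sublevel_bounded] run.
split=> [j j_reached j_stuck | all_terminate].
  exact: (run_nonterminating tau_gt1 sigma01 gmin_gt0 D_w0 run phi_C1 j_reached j_stuck).
exact: (run_all_terminate tau_gt1 sigma01 gmin_gt0 D_w0 run all_terminate phi_C1 gmin_le_gmax
  sublevel_bounded).
Qed.
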